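(* Let $M$ be a matroid on ground set $E$ that is $k$-nearly finitary for some integer $k$. Let $S(M)=\{F^*\cup B: F^*\text{ is a base of }(M^{\mathrm{fin}})^*,\ B\text{ is a base of }M,\ F^*\cap B=\emptyset\}$ and let $S(M)_{\min}$ be the set of inclusion-minimal elements of $S(M)$. Then $S(M)_{\min}$ is non-empty.
   Context: Matroids (possibly infinite): $\emptyset$ independent; subsets of independent sets independent; if $B$ is maximal independent and $A$ non-maximal independent, then $A\cup\{b\}$ is independent for some $b\in B\setminus A$; for independent $A\subseteq X\subseteq E$ there is a maximal independent $S$ with $A\subseteq S\subseteq X$. Bases are maximal independent sets. The dual $N^*$ has as bases the complements $E\setminus B$ of bases $B$ of $N$. The finitarization $M^{\mathrm{fin}}$ has as independent sets those sets all of whose finite subsets are independent in $M$. $M$ is $k$-nearly finitary if $|F\setminus B|\le k$ whenever a base $F$ of $M^{\mathrm{fin}}$ contains a base $B$ of $M$. *)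

From Stdlib Require Import List.

Section MatroidDefs.
Variable E : Type.

Definition subset (A B : E -> Prop) : Prop := forall x, A x -> B x.
Definition setU (A B : E -> Prop) : E -> Prop := fun x => A x \/ B x.
Definition set1 (b : E) : E -> Prop := fun x => x = b.
Definition disjoint (A B : E -> Prop) : Prop := forall x, A x -> B x -> False.
Definition set_eq (A B : E -> Prop) : Prop := forall x, A x <-> B x.

Definition finite_set (A : E -> Prop) : Prop :=
  exists l : list E, forall x, A x -> In x l.

Definition card_le (A : E -> Prop) (k : nat) : Prop :=
  exists l : list E, length l <= k /\ forall x, A x -> In x l.

Definition indep_system := (E -> Prop) -> Prop.

Definition base (I : indep_system) (B : E -> Prop) : Prop :=
  I B /\ forall B', I B' -> subset B B' -> subset B' B.

Definition max_indep_in (I : indep_system) (X S : E -> Prop) : Prop :=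
  I S /\ subset S X /\ forall S', I S' -> subset S S' -> subset S' X -> subset S' S.

(* Matroid axioms (possibly infinite), ground set = the whole type E *)
Definition is_matroid (I : indep_system) : Prop :=
  I (fun _ => False) /\
  (forall A B, I B -> subset A B -> I A) /\
  (forall A B, I A -> ~ base I A -> base I B ->
     exists b, B b /\ ~ A b /\ I (setU A (set1 b))) /\
  (forall A X, I A -> subset A X ->
     exists S, subset A S /\ max_indep_in I X S).

(* dual: its bases are the complements of the bases of N *)
Definition dual (I : indep_system) : indep_system :=
  fun A => exists B, base I B /\ disjoint A B.

Definition finitarization (I : indep_system) : indep_system :=
  fun A => forall F, finite_set F -> subset F A -> I F.

Definition nearly_finitary (k : nat) (I : indep_system) : Prop :=
  forall F B, base (finitarization I) F -> base I B -> subset B F ->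
    card_le (fun x => F x /\ ~ B x) k.

Definition SM (I : indep_system) (X : E -> Prop) : Prop :=
  exists Fs B, base (dual (finitarization I)) Fs /\ base I B /\
    disjoint Fs B /\ set_eq X (setU Fs B).

Definition SM_min (I : indep_system) (X : E -> Prop) : Prop :=
  SM I X /\ forall Y, SM I Y -> subset Y X -> subset X Y.

End MatroidDefs.

(** Elements of S(M) correspond to pairs F ⊇ B of a base F of M^fin and a
    base B of M, via X = (E \ F) ∪ B, whose complement is the gap F \ B.
    Such pairs exist: a base of M is independent in M^fin and extends to a
    base of M^fin by Zorn's lemma, since M^fin is finitary.  As M is
    k-nearly finitary every gap has at most k elements, so some pair has a
    gap of maximal size; its set X is inclusion-minimal, because any smaller
    element of S(M) would have a strictly larger gap. *)

From Stdlib Require Import List.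
From mathcomp Require Import ssreflect ssrfun ssrbool eqtype ssrnat.
From mathcomp Require Import boolp classical_sets.

Local Open Scope classical_set_scope.

Section FiniteSets.
Context {T : Type}.

Definition card_ge (A : set T) (n : nat) : Prop :=
  exists l : list T, NoDup l /\ length l = n /\ forall x, In x l -> A x.

Lemma card_ge0 (A : set T) : card_ge A 0.
Proof. by exists nil; split; [constructor | split]. Qed.

Lemma card_geS {A A' : set T} {n : nat} {x : T} :
  card_ge A n -> A `<=` A' -> A' x -> ~ A x -> card_ge A' n.+1.
Proof.
move=> [l [ndl [<- lA]]] AA' A'x nAx.
exists (x :: l); split; last split => //.
- by constructor => // /lA.
- by move=> y [<- | /lA /AA'].
Qed.

Lemma card_ge_le {A : set T} {n k : nat} :
  card_ge A n -> card_le T A k -> n <= k.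
Proof.
move=> [l [ndl [<- lA]]] [l' [/leP len_l' Al']].
apply: leq_trans len_l'; apply/leP.
by apply: NoDup_incl_length => // x /lA /Al'.
Qed.

Lemma chain_finite_cover {A : set T} {C : set (set T)} {F : set T} :
  total_on C classical_sets.subset -> finite_set T F ->
  F `<=` A `|` \bigcup_(X in C) X ->
  F `<=` A \/ exists2 Y, C Y & F `<=` A `|` Y.
Proof.
move=> Ctot [l]; elim: l F => [|a l IH] F Fl FAC; first by left=> x /Fl.
pose F' := [set x | F x /\ x <> a].
have F'l x : F' x -> In x l by move=> [/Fl [-> | //]].
have F'AC : F' `<=` A `|` \bigcup_(X in C) X by move=> x [/FAC].
have FF' : F `<=` F' `|` [set a].
  by move=> x Fx; have [-> | ] := pselect (x = a); [right | left].
have [[Fa nAa] | aA] := pselect (F a /\ ~ A a).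
- have [X CX Xa] : exists2 X, C X & X a.
    by case: (FAC a Fa) => // -[X]; exists X.
  right; have [F'A | [Y CY F'AY]] := IH F' F'l F'AC.
    by exists X => // x /FF' [/F'A | ->]; [left | right].
  have [XY | YX] := Ctot X Y CX CY.
    by exists Y => // x /FF' [/F'AY | ->]; [| right; apply: XY].
  by exists X => // x /FF' [/F'AY [| /YX] | ->]; [left | right | right].
- have FF'A : F `<=` F' `|` A.
    move=> x Fx; case: (FF' x Fx) => [|xa]; [left | right] => //.
    by rewrite xa in Fx *; apply: contrapT => nAa; apply: aA.
  have [F'A | [Y CY F'AY]] := IH F' F'l F'AC; [left | right; exists Y] => //.
    by move=> x /FF'A [/F'A |].
  by move=> x /FF'A [/F'AY | ]; [| left].
Qed.

End FiniteSets.

Section Duality.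
Context {E : Type} (J : indep_system E).

Lemma base_dual_compl (F : set E) : base E J F -> base E (dual E J) (~` F).
Proof.
move=> bF; split; first by exists F; split=> // x nFx.
case: bF => JF maxF.
move=> Fs [F' [[JF' maxF'] dF']] FFs x Fsx Fx.
have F'F : F' `<=` F.
  by move=> y F'y; apply: contrapT => nFy; exact: dF' y (FFs y nFy) F'y.
by apply: (dF' x Fsx); apply: (maxF' F).
Qed.

Lemma dual_base_compl (Fs : set E) :
  base E (dual E J) Fs -> exists2 F, base E J F & Fs = ~` F.
Proof.
move=> [[F [bF dF]] maxFs]; exists F => //.
apply/seteqP; split; first by move=> x Fsx Fx; apply: (dF x).
apply: maxFs; first by exists F; split=> // x nFx.
by move=> x Fsx Fx; apply: (dF x).
Qed.

End Duality.

Section NearlyFinitary.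
Context {E : Type} (I : indep_system E).

Local Notation finI := (finitarization E I).

Lemma finitarization_base_ext (A : set E) :
  finI A -> exists2 F, base E finI F & A `<=` F.
Proof.
move=> IA.
(* Zorn on the sets S with A ∪ S independent, rather than on the independent
   supersets of A, so that the empty chain needs no separate treatment. *)
have chain_ub (C : set (set E)) : C `<=` (fun S => finI (A `|` S)) ->
    total_on C classical_sets.subset -> finI (A `|` \bigcup_(X in C) X).
  move=> CP Ctot F Ffin FAC.
  have [FA | [Y CY FAY]] := chain_finite_cover Ctot Ffin FAC; first exact: IA.
  exact: CP Y CY F Ffin FAY.
have [S [IAS maxS]] := Zorn_bigcup chain_ub.
exists (A `|` S); last by move=> x; left.
split=> // F IF ASF x Fx; apply: contrapT => nASx.
apply: (maxS F).
- split; first by move=> y Sy; apply: ASF; right.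
  by move=> FS; apply: nASx; right; apply: FS.
- by move=> G Gfin GAF; apply: IF => // y /GAF [Ay | //]; apply: ASF; left.
Qed.

Definition nested_bases (F B : set E) : Prop :=
  base E finI F /\ base E I B /\ B `<=` F.

Lemma nested_bases_exist : is_matroid E I -> exists F B, nested_bases F B.
Proof.
move=> [I0 [Idown [_ Iext]]].
have [B [_ [IB [_ maxB]]]] := Iext set0 setT I0 (fun _ => False_ind _).
have bB : base E I B by split=> // B' IB' BB'; apply: maxB.
have [F bF BF] := finitarization_base_ext B (fun G _ GB => Idown G B IB GB).
by exists F, B.
Qed.

Lemma SM_nested (F B : set E) : nested_bases F B -> SM E I (~` F `|` B).
Proof.
move=> [bF [bB BF]]; exists (~` F), B.
split; first exact: base_dual_compl.
by do 2 split=> //; move=> x nFx /BF.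
Qed.

Lemma SM_nestedP (X : set E) :
  SM E I X -> exists F B, nested_bases F B /\ ~` X `<=` F `\` B.
Proof.
move=> [Fs [B [/dual_base_compl [F bF ->] [bB [dFB XFB]]]]].
exists F, B; split.
  by do 2 split=> //; move=> x Bx; apply: contrapT => nFx; apply: (dFB x).
move=> x nXx; split.
- by apply: contrapT => nFx; apply: nXx; apply/(XFB x); left.
- by move=> Bx; apply: nXx; apply/(XFB x); right.
Qed.

Definition gap_ge (n : nat) : Prop :=
  exists F B, nested_bases F B /\ card_ge (F `\` B) n.

Lemma gap_ge_bounded (k n : nat) : nearly_finitary E k I -> gap_ge n -> n <= k.
Proof.
move=> nf [F [B [[bF [bB BF]] gapFB]]].
exact: card_ge_le gapFB (nf F B bF bB BF).
Qed.

Lemma gap_ge_SM_proper {F B Y : set E} {n : nat} :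
  card_ge (F `\` B) n -> SM E I Y -> Y `<` ~` F `|` B -> gap_ge n.+1.
Proof.
move=> gapFB /SM_nestedP [FY [BY [FYBY YFB]]] [YX XnY].
have [x Xx nYx] : exists2 x, (~` F `|` B) x & ~ Y x.
  apply: contrapT => nx; apply: XnY => x Xx.
  by apply: contrapT => nYx; apply: nx; exists x.
have FB_nX : F `\` B `<=` ~` (~` F `|` B) by move=> y [Fy nBy] [].
exists FY, BY; split => //.
apply: (card_geS gapFB) (YFB x nYx) _ => [y /FB_nX nXy | /FB_nX //].
by apply: YFB => /YX.
Qed.

End NearlyFinitary.

Theorem theorem3p4p4 (E : Type) (I : indep_system E) (k : nat) :
  is_matroid E I -> nearly_finitary E k I ->
  exists X : E -> Prop, SM_min E I X.
Proof.
move=> M nf.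
have [F0 [B0 FB0]] := nested_bases_exist I M.
have gap0 : exists n, `[< gap_ge I n >].
  by exists 0; apply/asboolP; exists F0, B0; split; last exact: card_ge0.
have gap_ub n : `[< gap_ge I n >] -> n <= k.
  by move/asboolP; apply: gap_ge_bounded.
case: (ex_maxnP gap0 gap_ub) => n /asboolP [F [B [FB gapFB]]] max_n.
exists (~` F `|` B); split; first exact: SM_nested.
move=> Y SY YX; apply: contrapT => XnY.
have /asboolP /max_n := gap_ge_SM_proper I gapFB SY (conj YX XnY).
by rewrite ltnn.
Qed.
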